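(* Let $a,b\in\mathbb{Z}$ with $a^2-b^2\neq 0$, and let $G$ be the finite abelian group presented by the matrix $\begin{pmatrix} a & b\\ b & a\end{pmatrix}$, i.e. $G=\mathbb{Z}^2/\operatorname{im}\begin{pmatrix} a & b\\ b & a\end{pmatrix}$. Then either $G$ has an element of order $16$, or in the canonical decomposition of $G$ both the number of summands isomorphic to $\mathbb{Z}_2$ and the number of summands isomorphic to $\mathbb{Z}_4$ are even.
   Context: The canonical decomposition of a finite abelian group is its unique decomposition as a direct sum of cyclic groups of prime-power orders. *)

From HB Require Import structures.
From mathcomp Require Import all_boot all_order all_algebra all_fingroup all_solvable.
Set Implicit Arguments. Unset Strict Implicit. Unset Printing Implicit Defensive.
Import GRing.Theory.

(* G (a subgroup of a finite group gT) is presented by the integer matrix M,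
   i.e. G is isomorphic to Z^2 / im M : there is a group homomorphism
   phi : Z^2 -> gT (Z^2 as integer column vectors) onto G whose kernel is
   exactly the image (column lattice) of M. *)
Definition presented_by (M : 'M[int]_2) (gT : finGroupType) (G : {set gT}) :=
  exists phi : 'cV[int]_2 -> gT,
    [/\ (forall u v, phi (u + v)%R = (phi u * phi v)%g),
        (forall u, phi u \in G),
        (forall x, x \in G -> exists u, phi u = x) &
        (forall u, phi u = 1%g <-> exists z : 'cV[int]_2, u = (M *m z)%R)].

Definition canonical_decomposition (gT : finGroupType) (G : {group gT})
    (s : seq {group gT}) :=
  (\big[dprod/1]_(H <- s) H)%g = G /\
  (forall H, H \in s -> cyclic H /\ exists p k, prime p /\ #|H| = (p ^ k.+1)%N).

Definition num_summands (gT : finGroupType) (s : seq {group gT}) (n : nat) :=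
  count (fun H : {group gT} => #|H| == n) s.

Definition Mab (a b : int) : 'M[int]_2 :=
  \matrix_(i < 2, j < 2) (if i == j then a else b).

From HB Require Import structures.
From mathcomp Require Import all_boot all_order all_algebra all_fingroup all_solvable.
From mathcomp Require Import zify ring.
Set Implicit Arguments. Unset Strict Implicit. Unset Printing Implicit Defensive.
Import GRing.Theory Num.Theory.

(* By the Smith normal form, G is the direct product of cyclic groups of
   orders |d0| and |d1|, where d0 | d1, d0 d1 = +-(a^2 - b^2), and d0 is
   +-gcd(a, b) because it is an integral combination of the entries.  Writing
   a = d0 a', b = d0 b' with a', b' not both even gives |d1| = |d0| |a'^2 - b'^2|,
   and a'^2 - b'^2 is odd, or divisible by 8 (odd squares are 1 mod 8).  Hence
   either both cyclic factors have the same 2-part, or the second has 2-part at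
   least 8 times the first: it then has an element of order 16, unless the
   2-parts are 1 and 8.  In every case Z_2 and Z_4 occur an even number of
   times in this decomposition, hence in every canonical decomposition, the
   number of cyclic factors of each prime-power order being an invariant. *)

Lemma ord2_cases (i : 'I_2) : i = ord0 \/ i = ord_max.
Proof. by case: i => [[|[|//]] ?]; [left | right]; apply: val_inj. Qed.

Section IntMatrix.
Local Open Scope ring_scope.

Lemma absz_unit (x : int) : x \is a GRing.unit -> `|x|%N = 1%N.
Proof. by have -> : (x \is a GRing.unit) = (x == 1) || (x == -1) by []; case/orP=> /eqP->. Qed.

Lemma dvdz_mulmxl m n p (k : int) (A : 'M[int]_(m, n)) (B : 'M[int]_(n, p)) :
  (forall i j, k %| A i j)%Z -> forall i j, (k %| (A *m B) i j)%Z.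
Proof. by move=> kA i j; rewrite mxE rpred_sum // => l _; apply/dvdz_mulr/kA. Qed.

Lemma dvdz_mulmxr m n p (k : int) (A : 'M[int]_(m, n)) (B : 'M[int]_(n, p)) :
  (forall i j, k %| B i j)%Z -> forall i j, (k %| (A *m B) i j)%Z.
Proof. by move=> kB i j; rewrite mxE rpred_sum // => l _; apply/dvdz_mull/kB. Qed.

Lemma diag_mx_image n (r : 'rV[int]_n) (u : 'cV[int]_n) :
  (exists z, u = diag_mx r *m z) <-> (forall i, r ord0 i %| u i ord0)%Z.
Proof.
split=> [[z ->] i | ru]; first by rewrite mul_diag_mx mxE dvdz_mulr.
exists (\col_i (u i ord0 %/ r ord0 i)%Z); apply/matrixP => i j.
by rewrite [j]ord1 mul_diag_mx !mxE mulrC divzK.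
Qed.

Lemma Smith_normal_form2 (M : 'M[int]_2) : exists L R (r : 'rV[int]_2),
  [/\ L \in unitmx, R \in unitmx, (r ord0 ord0 %| r ord0 ord_max)%Z &
       M = L *m diag_mx r *m R].
Proof.
have [L Lu [R Ru [d sd defM]]] := int_Smith_normal_form M.
exists L, R, (\row_i d`_i); split=> //.
  by rewrite !mxE; case: (d) sd => [|x [|y t]] //=; rewrite ?dvdz0 // => /andP[].
by rewrite defM; congr (_ *m _ *m _); apply/matrixP => i j; rewrite !mxE.
Qed.

Section SmithFacts.
Variables (M L R : 'M[int]_2) (r : 'rV[int]_2).
Hypotheses (Lu : L \in unitmx) (Ru : R \in unitmx).
Hypotheses (r01 : (r ord0 ord0 %| r ord0 ord_max)%Z) (defM : M = L *m diag_mx r *m R).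

Lemma Smith2_dvd_entries i j : (r ord0 ord0 %| M i j)%Z.
Proof.
rewrite defM; apply: dvdz_mulmxl; apply: dvdz_mulmxr => {}i {}j.
rewrite mxE -mulr_natr dvdz_mulr //.
by case: (ord2_cases i) => ->; [apply: dvdzz | apply: r01].
Qed.

Lemma Smith2_common_divisor k : (forall i j, k %| M i j)%Z -> (k %| r ord0 ord0)%Z.
Proof.
have -> : r ord0 ord0 = (invmx L *m M *m invmx R) ord0 ord0.
  by rewrite defM !mulmxA mulVmx // mul1mx mulmxK // mxE mulr1n.
by move=> kM; apply/dvdz_mulmxl/dvdz_mulmxr.
Qed.

Lemma Smith2_absz_det :
  `|\det M|%N = (`|r ord0 ord0| * `|r ord0 ord_max|)%N.
Proof.
have [dL dR] : `|\det L|%N = 1%N /\ `|\det R|%N = 1%N.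
  by split; apply: absz_unit; rewrite -unitmxE.
rewrite defM !det_mulmx !abszM dL dR det_diag big_ord_recl big_ord1 abszM.
by rewrite mul1n muln1 (_ : lift ord0 ord0 = ord_max) //; apply: val_inj.
Qed.
End SmithFacts.

End IntMatrix.

Lemma presented_by_unimodular (M L R : 'M[int]_2) (gT : finGroupType) (G : {set gT}) :
  L \in unitmx -> R \in unitmx -> presented_by (L *m M *m R)%R G -> presented_by M G.
Proof.
move=> Lu Ru [phi [phiM phiG phiS phiK]].
exists (fun u => phi (L *m u)%R); split=> [u v | u | x /phiS[u <-] | u] //.
- by rewrite mulmxDr phiM.
- by exists (invmx L *m u)%R; rewrite mulKVmx.
rewrite phiK; split=> [[z] | [z ->]].
  rewrite -!mulmxA => /(congr1 (mulmx (invmx L))); rewrite !mulKmx // => ->.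
  by exists (R *m z)%R.
by exists (invmx R *m z)%R; rewrite -!mulmxA mulKVmx.
Qed.

Section DiagonalPresentation.
Local Open Scope ring_scope.
Variables (gT : finGroupType) (G : {group gT}) (r : 'rV[int]_2) (phi : 'cV[int]_2 -> gT).
Hypothesis phiM : forall u v, phi (u + v) = (phi u * phi v)%g.
Hypothesis phiG : forall u, phi u \in G.
Hypothesis phiS : forall x, x \in G -> exists u, phi u = x.
Hypothesis phiK : forall u, phi u = 1%g <-> forall i, (r ord0 i %| u i ord0)%Z.

Lemma phi0 : phi 0 = 1%g.
Proof. by apply: (mulgI (phi 0)); rewrite -phiM addr0 mulg1. Qed.

Lemma phiN u : phi (- u) = (phi u)^-1%g.
Proof. by apply/eqP; rewrite eq_sym eq_invg_mul -phiM addrN phi0. Qed.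

Lemma phiMn u n : phi (n%:Z *: u) = (phi u ^+ n)%g.
Proof.
elim: n => [|n IHn]; first by rewrite scale0r phi0.
by rewrite -[n.+1]addn1 PoszD scalerDl scale1r phiM IHn addn1 expgSr.
Qed.

Lemma phiZ_cycle (c : int) u : phi (c *: u) \in <[phi u]>%g.
Proof.
case: c => n; first by rewrite phiMn mem_cycle.
by rewrite NegzE scaleNr phiN phiMn groupV mem_cycle.
Qed.

Lemma phi_commute u v : commute (phi u) (phi v).
Proof. by rewrite /commute -!phiM addrC. Qed.

Lemma expg_phi_delta_eq1 i n : (phi (delta_mx i ord0) ^+ n)%g = 1%g <-> (`|r ord0 i| %| n)%N.
Proof.
rewrite -phiMn phiK; split=> [/(_ i) | ri j]; first by rewrite !mxE !eqxx mulr1.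
by rewrite !mxE; have [->|_] := eqVneq j i; rewrite ?eqxx ?mulr1 ?mulr0 ?dvdz0.
Qed.

Lemma order_phi_delta i : #[phi (delta_mx i ord0)]%g = `|r ord0 i|%N.
Proof.
apply/eqP; rewrite eqn_dvd order_dvdn; apply/andP; split.
  by apply/eqP/expg_phi_delta_eq1.
by apply/expg_phi_delta_eq1/expg_order.
Qed.

Lemma phi_delta_dprod :
  (<[phi (delta_mx ord0 ord0)]> \x <[phi (delta_mx ord_max ord0)]>)%g = G.
Proof.
rewrite dprodE.
- apply/eqP; rewrite eqEsubset mulG_subG !cycle_subG !phiG /=.
  apply/subsetP => _ /phiS[u <-].
  rewrite [u]matrix_sum_delta big_ord_recl big_ord1 big_ord1 big_ord1 phiM.
  by rewrite (_ : lift ord0 ord0 = ord_max) ?mem_mulg ?phiZ_cycle //; apply: val_inj.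
- by apply/centsP => _ /cycleP[i ->] _ /cycleP[j ->]; apply/commuteX2/phi_commute.
apply/trivgP/subsetP => _ /setIP[/cycleP[i ->] /cycleP[j eij]].
suff -> : (phi (delta_mx ord0 ord0) ^+ i)%g = 1%g by apply: group1.
apply/expg_phi_delta_eq1.
have /phiK/(_ ord0) : phi (i%:Z *: delta_mx ord0 ord0 - j%:Z *: delta_mx ord_max ord0) = 1%g.
  by rewrite phiM phiN !phiMn eij mulgV.
by rewrite !mxE /= mulr1 mulr0 subr0.
Qed.
End DiagonalPresentation.

Lemma presented_by_diag (gT : finGroupType) (G : {group gT}) (r : 'rV[int]_2) :
  presented_by (diag_mx r) G ->
  exists x y, [/\ (<[x]> \x <[y]>)%g = G, #[x]%g = `|r ord0 ord0| & #[y]%g = `|r ord0 ord_max|].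
Proof.
case=> phi [phiM phiG phiS phiK].
have {}phiK u : phi u = 1%g <-> forall i, (r ord0 i %| u i ord0)%Z.
  by rewrite phiK diag_mx_image.
exists (phi (delta_mx ord0 ord0)), (phi (delta_mx ord_max ord0)).
by split; [apply: phi_delta_dprod | apply: order_phi_delta ..].
Qed.

Lemma eq_prime_powers p q m n : prime p -> prime q ->
  (p ^ m.+1 == q ^ n.+1) = (p == q) && (m == n).
Proof.
move=> pp pq; have [<-|neq] /= := eqVneq p q; first by rewrite eqn_exp2l ?prime_gt1.
apply/negbTE/eqP => epq; case/negP: neq.
have : q %| p ^ m.+1 by rewrite epq dvdn_exp.
by rewrite Euclid_dvdX // andbT dvdn_prime2 // eq_sym.
Qed.

Lemma logn_prime_power_eq p q k j : prime p -> prime q ->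
  (logn p (q ^ k.+1) == j.+1) = (q ^ k.+1 == p ^ j.+1).
Proof.
move=> pp pq; rewrite eq_prime_powers // lognX logn_prime // eq_sym.
by have [_|_] := eqVneq p q; rewrite ?muln1 ?muln0.
Qed.

Lemma cyclic_seq_cycles (gT : finGroupType) (s : seq {group gT}) :
  (forall H, H \in s -> cyclic H) -> exists b : seq gT, s = [seq <[x]>%G | x <- b].
Proof.
elim: s => [|H s IHs] cs; first by exists [::].
have /cyclicP[x defH] := cs H (mem_head _ _).
have [b ->] := IHs (fun K sK => cs K (mem_behead (s := H :: s) sK)).
by exists (x :: b); congr (_ :: _); apply: group_inj.
Qed.

Lemma count_logn_eq_dprod_cycle (gT : finGroupType) (G : {group gT}) (b1 b2 : seq gT) p j :
  (\big[dprod/1]_(x <- b1) <[x]>)%g = G -> (\big[dprod/1]_(x <- b2) <[x]>)%g = G ->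
  count (fun x => logn p #[x]%g == j.+1) b1 = count (fun x => logn p #[x]%g == j.+1) b2.
Proof.
have count_eq b : count (fun x => logn p #[x]%g == j.+1) b =
    count (fun x => j < logn p #[x]%g) b - count (fun x => j.+1 < logn p #[x]%g) b.
  apply/esym/(canLR (addnK _)).
  by elim: b => //= x b ->; case: ltngtP => /=; lia.
move=> defG1 defG2; rewrite !count_eq.
by rewrite !(count_logn_dprod_cycle _ _ defG1) !(count_logn_dprod_cycle _ _ defG2).
Qed.

Lemma num_summands_dprod_cycle (gT : finGroupType) (G : {group gT}) s (b : seq gT) p j :
  prime p -> canonical_decomposition G s -> (\big[dprod/1]_(x <- b) <[x]>)%g = G ->
  num_summands s (p ^ j.+1) = count (fun x => logn p #[x]%g == j.+1) b.
Proof.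
move=> pp [defG ppH] defGb.
have [c defs] := cyclic_seq_cycles (fun H sH => (ppH H sH).1).
rewrite defs big_map in defG; rewrite -(count_logn_eq_dprod_cycle _ _ defG defGb).
rewrite /num_summands defs count_map; apply: eq_in_count => x cx.
have /ppH[_ [q [k [pq ox]]]] : <[x]>%G \in s by rewrite defs map_f.
by rewrite /= /order ox logn_prime_power_eq.
Qed.

Lemma odd_sqr_mod8 A : odd A -> A ^ 2 = 1 %[mod 8].
Proof.
move=> oA; rewrite -modnXm; have : odd (A %% 8) by rewrite odd_mod.
have : A %% 8 < 8 by rewrite ltn_pmod.
by case: (A %% 8) => [|[|[|[|[|[|[|[|]]]]]]]].
Qed.

Lemma sqr_sub_odd_or_dvd8 (A B d : nat) : ~~ ((2 %| A) && (2 %| B)) ->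
  d + B ^ 2 = A ^ 2 -> odd d || (8 %| d).
Proof.
rewrite !dvdn2 -negb_or => oAB eqd.
case oA: (odd A); case oB: (odd B); rewrite ?oA ?oB //= in oAB.
- have := odd_sqr_mod8 oA; have := odd_sqr_mod8 oB.
  by rewrite -eqd /dvdn; lia.
- by move: (congr1 odd eqd); rewrite oddD !oddX oA oB addbF => ->.
- by move: (congr1 odd eqd); rewrite oddD !oddX oA oB addbT => /negbFE->.
Qed.

Lemma sqr_diff_odd_or_dvd8 (x y : int) : ~~ ((2 %| x) && (2 %| y))%Z ->
  odd `|(x ^+ 2 - y ^+ 2)%R| || (8 %| `|(x ^+ 2 - y ^+ 2)%R|).
Proof.
rewrite !dvdzE => oxy.
have : (`|(x ^+ 2 - y ^+ 2)%R| + `|(y ^+ 2)%R| = `|(x ^+ 2)%R| \/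
        `|(x ^+ 2 - y ^+ 2)%R| + `|(x ^+ 2)%R| = `|(y ^+ 2)%R|)%N.
  by move: (sqr_ge0 x) (sqr_ge0 y); move: (x ^+ 2)%R (y ^+ 2)%R; lia.
rewrite !abszX => -[] /sqr_sub_odd_or_dvd8; apply => //.
by rewrite andbC.
Qed.

Lemma logn2_pair_even n d j : 0 < n * d -> odd d || (8 %| d) -> ~~ (16 %| n * d) ->
  j < 2 -> ~~ odd ((logn 2 n == j.+1) + (logn 2 (n * d) == j.+1)).
Proof.
rewrite muln_gt0 => /andP[n_gt0 d_gt0] d2 n16 j2; rewrite lognM //.
have [od | d8] := orP d2.
  by rewrite (@logn_coprime 2 d) ?coprime2n // addn0 addnn odd_double.
have ld3 : 3 <= logn 2 d by rewrite -pfactor_dvdn.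
have : ~~ (2 ^ 4 %| n * d) := n16.
rewrite pfactor_dvdn ?muln_gt0 ?n_gt0 // lognM // -ltnNge => l4.
have -> : logn 2 n = 0 by lia.
have -> : logn 2 d = 3 by lia.
by case: j j2 => [|[]].
Qed.

Lemma det_Mab (a b : int) : (\det (Mab a b) = a ^+ 2 - b ^+ 2)%R.
Proof.
rewrite (expand_det_row _ ord0) !big_ord_recl big_ord0 /cofactor !det_mx11 !mxE /=.
by rewrite addr0 expr0 expr1 mul1r mulN1r mulrN -!expr2.
Qed.

Lemma Mab_Smith_factors (a b : int) (L R : 'M[int]_2) (r : 'rV[int]_2) :
  (a ^+ 2 - b ^+ 2 != 0)%R -> L \in unitmx -> R \in unitmx ->
  (r ord0 ord0 %| r ord0 ord_max)%Z -> Mab a b = (L *m diag_mx r *m R)%R ->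
  exists2 d, odd d || (8 %| d) & `|r ord0 ord_max| = `|r ord0 ord0| * d.
Proof.
move=> ab0 Lu Ru r01 defM; set d0 := r ord0 ord0.
have d0_dvd := Smith2_dvd_entries r01 defM.
have [al ea] : exists al, a = (al * d0)%R.
  by exists (a %/ d0)%Z; rewrite divzK //; have := d0_dvd ord0 ord0; rewrite mxE.
have [be eb] : exists be, b = (be * d0)%R.
  by exists (b %/ d0)%Z; rewrite divzK //; have := d0_dvd ord0 ord_max; rewrite mxE.
have det_eq : `|d0| * `|r ord0 ord_max| = `|d0| * (`|d0| * `|(al ^+ 2 - be ^+ 2)%R|).
  rewrite -(Smith2_absz_det Lu Ru defM) det_Mab ea eb mulnA mulnn -abszX -abszM.
  by congr `|_|; ring.
have d0_gt0 : 0 < `|d0|.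
  by move: ab0; rewrite -absz_gt0 -det_Mab (Smith2_absz_det Lu Ru defM) muln_gt0 => /andP[].
exists `|(al ^+ 2 - be ^+ 2)%R|; last by apply/eqP; rewrite -(eqn_pmul2l d0_gt0) det_eq.
apply: sqr_diff_odd_or_dvd8; apply/negP => /andP[/dvdzP[al' eal] /dvdzP[be' ebe]].
(* [d0] is a combination of the entries of [Mab a b], so [2 d0] cannot divide them all. *)
have : ((2 * d0)%R %| (1 * d0)%R)%Z.
  rewrite mul1r; apply: (Smith2_common_divisor Lu Ru defM) => i j.
  by rewrite mxE; case: ifP => _; rewrite ?ea ?eb ?eal ?ebe -mulrA dvdz_mull.
by rewrite dvdz_mul2r // -absz_gt0.
Qed.

Lemma order_expg_div (gT : finGroupType) (x : gT) n :
  n %| #[x]%g -> #[x ^+ (#[x] %/ n)]%g = n.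
Proof.
case/dvdnP => k ox; have /andP[k_gt0 n_gt0] : (0 < k) && (0 < n).
  by rewrite -muln_gt0 -ox order_gt0.
by rewrite orderXdiv ox mulnK ?mulKn ?dvdn_mulr.
Qed.

Theorem mainTheorem9 (a b : int) (gT : finGroupType) (G : {group gT})
    (s : seq {group gT}) :
  (a ^+ 2 - b ^+ 2 != 0)%R ->
  presented_by (Mab a b) G ->
  canonical_decomposition G s ->
  (exists2 x, x \in G & #[x]%g = 16) \/
  (~~ odd (num_summands s 2) /\ ~~ odd (num_summands s 4)).
Proof.
move=> ab0 presG decG.
have [L [R [r [Lu Ru r01 defM]]]] := Smith_normal_form2 (Mab a b).
have [d d_2adic d1E] := Mab_Smith_factors ab0 Lu Ru r01 defM.
rewrite defM in presG.
have [x [y [dGxy ox oy]]] := presented_by_diag (presented_by_unimodular Lu Ru presG).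
have [y16 | y16] := boolP (16 %| #[y]%g).
  left; exists (y ^+ (#[y] %/ 16))%g; last exact: order_expg_div.
  by rewrite groupX // -(dprodW dGxy) (subsetP (mulG_subr _ _)) ?cycle_id.
right; have decGxy : (\big[dprod/1]_(z <- [:: x; y]) <[z]>)%g = G.
  by rewrite !big_cons big_nil dprodg1.
rewrite (num_summands_dprod_cycle (p := 2) 0 _ decG decGxy) //.
rewrite (num_summands_dprod_cycle (p := 2) 1 _ decG decGxy) //= ox oy d1E !addn0.
by rewrite oy d1E in y16; split; apply: logn2_pair_even; rewrite // -d1E -oy order_gt0.
Qed.
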